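(* Consider an instance of the MA-HLP and the formulation $FZ\text{-}S$ as described in the context. Let $(\overline{\mathbf y},\overline{\mathbf z},\overline{\boldsymbol\eta})$ be an optimal solution of the LP relaxation of $FZ\text{-}S$, with $\overline{\mathbf y}\in[0,1]^E$, $\overline{\mathbf z}\in[0,1]^V$. For $r\in R$ and $h\in T^r$, let $\overline u_{rh}=\overline y_{e_h}$ if $h\in T^r_y$ and $\overline u_{rh}=\overline z_{i_h}$ if $h\in T^r_z$, and let $\overline t_r=\min\{t\in T^r:\ \sum_{h=1}^{t}\overline u_{rh}\ge 1\}$ (this set being presupposed nonempty). Then the optimal value of the LP relaxation of $FZ\text{-}S$ is \[\overline v_{FZS}=\sum_{i\in V}f_i\overline z_i+\sum_{r\in R}\Big[\overline v_{r\overline t_r}\Big(1-\sum_{h=1}^{\overline t_r-1}\overline u_{rh}\Big)+\sum_{h=1}^{\overline t_r-1}\overline v_{rh}\,\overline u_{rh}\Big].\]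
   Context: Instance: a complete network with node set $V=\{1,\dots,n\}$, unit routing costs $c_{ij}\ge0$ ($i,j\in V$) satisfying the triangle inequality with $c_{ii}=0$; $E=\{ij: i<j\}$ is the set of undirected edges and $\delta(i)$ the set of edges incident with $i$. Each node $i$ has hub setup cost $f_i\ge0$. Commodities $r\in R$ are triplets $(o^r,d^r,w^r)$ with $w^r\ge0$. Parameters $0\le\alpha\le1$, $\gamma,\theta>\alpha$. For $r\in R$, $i,j\in V$: $C_{rij}=w^r(\gamma c_{o^ri}+\alpha c_{ij}+\theta c_{jd^r})$; $F_{re}=\min\{C_{rij},C_{rji}\}$ for $e=ij\in E$; $H_{ri}=C_{rii}$. For $r\in R$ let $E^r=\{e=ij\in E: F_{re}<\min\{H_{ri},H_{rj}\}\}$ and $V^r=\{i\in V:\ \text{there is } e\in\delta(i) \text{ with } H_{ri}<F_{re}\}$. Let $T^r=\{1,\dots,|E^r|+|V^r|\}$ index the values $\{F_{re}\}_{e\in E^r}\cup\{H_{ri}\}_{i\in V^r}$ sorted in nondecreasing order (ties broken arbitrarily) as $\overline v_{r1}\le\overline v_{r2}\le\cdots$; $T^r=T^r_y\cup T^r_z$ where for $t\in T^r_y$ the value $\overline v_{rt}=F_{re_t}$ comes from edge $e_t\in E^r$, and for $t\in T^r_z$ the value $\overline v_{rt}=H_{ri_t}$ comes from node $i_t\in V^r$. Formulation $FZ\text{-}S$: variables $y_e\in\{0,1\}$ ($e\in E$), $z_i\in\{0,1\}$ ($i\in V$), $\eta^r\ge0$ ($r\in R$); minimize $\sum_{i\in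 V}f_iz_i+\sum_{r\in R}\eta^r$ subject to, for all $r\in R$, $t\in T^r$: $\eta^r\ge\overline v_{rt}+\sum_{h\in T^r_y,\,h\le t-1}(F_{re_h}-\overline v_{rt})y_{e_h}+\sum_{h\in T^r_z,\,h\le t-1}(H_{ri_h}-\overline v_{rt})z_{i_h}$; and $y_e\le z_i$, $y_e\le z_j$ for all $e=ij\in E$. The LP relaxation replaces the binary constraints by $y_e,z_i\in[0,1]$. *)

From HB Require Import structures.
From mathcomp Require Import all_boot all_order all_algebra.
Set Implicit Arguments. Unset Strict Implicit. Unset Printing Implicit Defensive.
Import Order.TTheory GRing.Theory Num.Theory.
Local Open Scope ring_scope.

(* Undirected edges e = ij with i < j, on node set V = 'I_n. *)
Definition edge (n : nat) := {p : 'I_n * 'I_n | (p.1 < p.2)%N}.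

(* An element of T^r is either an edge (T^r_y) or a node (T^r_z). *)
Definition item (n : nat) := (edge n + 'I_n)%type.

Section FZS.
Variables (R : realFieldType) (n : nat) (K : finType).
(* K = commodity set R; o, d origins/destinations, w weights *)
Variables (c : 'I_n -> 'I_n -> R) (o d : K -> 'I_n) (w : K -> R)
          (alpha gamma theta : R).

Definition Ccost (r : K) (i j : 'I_n) : R :=
  w r * (gamma * c (o r) i + alpha * c i j + theta * c j (d r)).

Definition Fcost (r : K) (e : edge n) : R :=
  Num.min (Ccost r (val e).1 (val e).2) (Ccost r (val e).2 (val e).1).

Definition Hcost (r : K) (i : 'I_n) : R := Ccost r i i.

Definition incident (i : 'I_n) (e : edge n) : bool :=
  ((val e).1 == i) || ((val e).2 == i).

Definition inEr (r : K) (e : edge n) : Prop :=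
  Fcost r e < Num.min (Hcost r (val e).1) (Hcost r (val e).2).

Definition inVr (r : K) (i : 'I_n) : Prop :=
  exists e : edge n, incident i e /\ Hcost r i < Fcost r e.

Definition inT (r : K) (a : item n) : Prop :=
  match a with inl e => inEr r e | inr i => inVr r i end.

Definition vval (r : K) (a : item n) : R :=
  match a with inl e => Fcost r e | inr i => Hcost r i end.

Definition uval (y : edge n -> R) (z : 'I_n -> R) (a : item n) : R :=
  match a with inl e => y e | inr i => z i end.

Definition valid_order (s : K -> seq (item n)) : Prop :=
  forall r : K,
    [/\ uniq (s r), (forall a, a \in s r <-> inT r a)
      & sorted (fun a b => vval r a <= vval r b) (s r)].

(* the element at (0-based) position t of s, i.e. position t+1 in the paper *)
Definition kth (T : Type) (s : seq T) (t : 'I_(size s)) : T :=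
  tnth (in_tuple s) t.

Definition FZS_LP_feasible (s : K -> seq (item n))
    (y : edge n -> R) (z : 'I_n -> R) (eta : K -> R) : Prop :=
  [/\ (forall e, 0 <= y e <= 1),
      (forall i, 0 <= z i <= 1),
      (forall r, 0 <= eta r),
      (forall (r : K) (t : 'I_(size (s r))),
          vval r (kth t)
          + \sum_(b <- take t (s r)) (vval r b - vval r (kth t)) * uval y z b
          <= eta r)
    & (forall e : edge n, y e <= z (val e).1 /\ y e <= z (val e).2)].

Definition FZS_objective (f : 'I_n -> R) (z : 'I_n -> R) (eta : K -> R) : R :=
  \sum_(i < n) f i * z i + \sum_(r : K) eta r.

Definition FZS_LP_optimal (s : K -> seq (item n)) (f : 'I_n -> R)
    (y : edge n -> R) (z : 'I_n -> R) (eta : K -> R) : Prop :=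
  FZS_LP_feasible s y z eta /\
  forall y' z' eta', FZS_LP_feasible s y' z' eta' ->
    FZS_objective f z eta <= FZS_objective f z' eta'.

End FZS.

From HB Require Import structures.
From mathcomp Require Import all_boot all_order all_algebra.
From mathcomp Require Import ring.
Import Order.TTheory GRing.Theory Num.Theory.
Set Implicit Arguments.
Unset Strict Implicit.
Unset Printing Implicit Defensive.
Local Open Scope ring_scope.

(* For one commodity, write G(t) for the right-hand side of the t-th
   constraint and S(t) for the sum of the first t values u.  Then
   G(t+1) - G(t) = (v_(t+1) - v_t) (1 - S(t+1)); since v is nondecreasing,
   G increases while S(t+1) < 1 and decreases once S(t+1) >= 1, so G(tbar)
   is the binding constraint.  It is nonnegative, so replacing each eta^r
   by G(tbar_r) keeps (y, z, eta) feasible; optimality then forces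
   eta^r = G(tbar_r) in the sum. *)

Lemma kth_nth (T : Type) (s : seq T) (t : 'I_(size s)) (x0 : T) :
  kth t = nth x0 s t.
Proof. exact: tnth_nth. Qed.

Section CutConstraints.
Variables (R : numDomainType) (T : Type) (x0 : T) (s : seq T) (v u : T -> R).

Definition prefix_sum (t : nat) : R := \sum_(b <- take t s) u b.

Definition cut (t : nat) : R :=
  v (nth x0 s t) + \sum_(b <- take t s) (v b - v (nth x0 s t)) * u b.

Lemma cutE t :
  cut t = v (nth x0 s t) * (1 - prefix_sum t) + \sum_(b <- take t s) v b * u b.
Proof.
rewrite /cut /prefix_sum (eq_bigr (fun b => v b * u b - v (nth x0 s t) * u b)).
  by rewrite sumrB -mulr_sumr; ring.
by move=> b _; rewrite mulrBl.
Qed.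

Lemma sum_take_succ (F : T -> R) t : (t < size s)%N ->
  \sum_(b <- take t.+1 s) F b = \sum_(b <- take t s) F b + F (nth x0 s t).
Proof. by move=> lt_ts; rewrite (take_nth x0 lt_ts) -cats1 big_cat big_seq1. Qed.

Lemma cutS t : (t.+1 < size s)%N ->
  cut t.+1 - cut t = (v (nth x0 s t.+1) - v (nth x0 s t)) * (1 - prefix_sum t.+1).
Proof.
by move=> lt_t1s; rewrite !cutE /prefix_sum !sum_take_succ ?(ltnW lt_t1s); ring.
Qed.

Hypotheses (sorted_v : sorted (fun a b => v a <= v b) s) (u_ge0 : forall b, 0 <= u b).

Lemma prefix_sum_homo : {homo prefix_sum : t t' / (t <= t')%N >-> t <= t'}.
Proof.
move=> t t' /subnKC <-; rewrite /prefix_sum takeD big_cat lerDl.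
exact: sumr_ge0.
Qed.

Lemma v_nth_succ t : (t.+1 < size s)%N -> v (nth x0 s t) <= v (nth x0 s t.+1).
Proof.
move=> lt_t1s; have le_v_trans : transitive (fun a b => v a <= v b).
  by move=> a b c; apply: le_trans.
by apply: (sorted_ltn_nth le_v_trans) => //; rewrite inE (ltnW lt_t1s).
Qed.

Lemma cut_ge0 t : (forall b, 0 <= v b) -> prefix_sum t <= 1 -> 0 <= cut t.
Proof.
move=> v_ge0 le_sum1; rewrite cutE addr_ge0 ?mulr_ge0 ?subr_ge0 //.
by apply: sumr_ge0 => b _; apply: mulr_ge0.
Qed.

Section Crossing.
Variable tb : nat.
Hypotheses (lt_tb_size : (tb < size s)%N) (crossing : 1 <= prefix_sum tb.+1)
           (below : forall t, (t < tb)%N -> prefix_sum t.+1 < 1).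

Lemma prefix_sum_crossing_le1 : prefix_sum tb <= 1.
Proof.
case: tb below => [|t] below_t; last exact/ltW/below_t.
by rewrite /prefix_sum take0 big_nil ler01.
Qed.

Lemma cut_le_crossing t : (t < size s)%N -> cut t <= cut tb.
Proof.
move=> lt_ts; have [le_ttb | lt_tbt] := leqP t tb.
  rewrite -subr_ge0 -(telescope_sumr _ le_ttb) big_nat_cond.
  apply: sumr_ge0 => k /andP[/andP[_ lt_ktb] _].
  have lt_k1s : (k.+1 < size s)%N by apply: leq_ltn_trans lt_tb_size.
  by rewrite cutS // mulr_ge0 ?subr_ge0 ?v_nth_succ ?ltW ?below.
rewrite -subr_le0 -(telescope_sumr _ (ltnW lt_tbt)) big_nat_cond.
apply: sumr_le0 => k /andP[/andP[le_tbk lt_kt] _].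
have lt_k1s : (k.+1 < size s)%N by apply: leq_ltn_trans lt_ts.
rewrite cutS // mulr_ge0_le0 ?subr_ge0 ?v_nth_succ // subr_le0.
by apply: le_trans crossing _; apply: prefix_sum_homo.
Qed.

End Crossing.
End CutConstraints.

Section FZSCosts.
Variables (R : realFieldType) (n : nat) (K : finType) (c : 'I_n -> 'I_n -> R)
          (o d : K -> 'I_n) (w : K -> R) (alpha gamma theta : R).
Hypotheses (c_ge0 : forall i j, 0 <= c i j) (w_ge0 : forall r, 0 <= w r)
           (alpha_ge0 : 0 <= alpha) (gamma_ge0 : 0 <= gamma) (theta_ge0 : 0 <= theta).

Lemma Ccost_ge0 r i j : 0 <= Ccost c o d w alpha gamma theta r i j.
Proof. by rewrite mulr_ge0 // !addr_ge0 // mulr_ge0. Qed.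

Lemma vval_ge0 r a : 0 <= vval c o d w alpha gamma theta r a.
Proof. by case: a => [e|i]; rewrite /= /Fcost /Hcost ?le_min !Ccost_ge0. Qed.

End FZSCosts.

Section FZSRelaxation.
Variables (R : realFieldType) (n : nat) (K : finType) (c : 'I_n -> 'I_n -> R)
          (o d : K -> 'I_n) (w : K -> R) (alpha gamma theta : R)
          (s : K -> seq (item n)) (y : edge n -> R) (z : 'I_n -> R)
          (x0 : K -> item n).
Local Notation v := (vval c o d w alpha gamma theta).
Local Notation feasible := (FZS_LP_feasible c o d w alpha gamma theta s).

Lemma uval_ge0 (eta : K -> R) a : feasible y z eta -> 0 <= uval y z a.
Proof.
case=> y01 z01 _ _ _.
by case: a => [e|i] /=; [case/andP: (y01 e) | case/andP: (z01 i)].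
Qed.

Lemma feasible_cut_le (eta : K -> R) : feasible y z eta ->
  forall r (t : 'I_(size (s r))), cut (x0 r) (s r) (v r) (uval y z) t <= eta r.
Proof. by case=> _ _ _ rhs_le _ r t; rewrite /cut -kth_nth. Qed.

Lemma feasible_eta (eta eta' : K -> R) : feasible y z eta ->
  (forall r, 0 <= eta' r) ->
  (forall r (t : 'I_(size (s r))), cut (x0 r) (s r) (v r) (uval y z) t <= eta' r) ->
  feasible y z eta'.
Proof.
case=> y01 z01 _ _ yz eta'_ge0 cut_le; split=> // r t.
by rewrite (kth_nth t (x0 r)); apply: cut_le.
Qed.

Lemma optimal_eta_sum (f : 'I_n -> R) (eta eta' : K -> R) :
  FZS_LP_optimal c o d w alpha gamma theta s f y z eta -> feasible y z eta' ->
  (forall r, eta' r <= eta r) -> \sum_(r : K) eta r = \sum_(r : K) eta' r.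
Proof.
case=> _ minimal feas' le_eta; apply/le_anti/andP; split.
  by have := minimal _ _ _ feas'; rewrite /FZS_objective lerD2l.
exact: ler_sum.
Qed.

End FZSRelaxation.

Theorem proposition2 (R : realFieldType) (n : nat) (K : finType)
    (c : 'I_n -> 'I_n -> R) (f : 'I_n -> R)
    (o d : K -> 'I_n) (w : K -> R) (alpha gamma theta : R)
    (hc0 : forall i j, 0 <= c i j)
    (hcii : forall i, c i i = 0)
    (hctri : forall i j k, c i k <= c i j + c j k)
    (hf : forall i, 0 <= f i)
    (hw : forall r, 0 <= w r)
    (halpha : 0 <= alpha <= 1) (hgamma : alpha < gamma) (htheta : alpha < theta)
    (s : K -> seq (item n))
    (hs : valid_order c o d w alpha gamma theta s)
    (ybar : edge n -> R) (zbar : 'I_n -> R) (etabar : K -> R)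
    (hopt : FZS_LP_optimal c o d w alpha gamma theta s f ybar zbar etabar)
    (tbar : forall r : K, 'I_(size (s r)))
    (htbar : forall r : K,
        1 <= \sum_(b <- take (tbar r).+1 (s r)) uval ybar zbar b /\
        (forall t : nat, (t < tbar r)%N ->
           \sum_(b <- take t.+1 (s r)) uval ybar zbar b < 1)) :
  FZS_objective f zbar etabar =
  \sum_(i < n) f i * zbar i
  + \sum_(r : K)
      (vval c o d w alpha gamma theta r (kth (tbar r))
         * (1 - \sum_(b <- take (tbar r) (s r)) uval ybar zbar b)
       + \sum_(b <- take (tbar r) (s r))
           vval c o d w alpha gamma theta r b * uval ybar zbar b).
Proof.
have [feas _] := hopt; have u_ge0 := uval_ge0 _ feas.
have [alpha_ge0 _] := andP halpha.
have gamma_ge0 := le_trans alpha_ge0 (ltW hgamma).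
have theta_ge0 := le_trans alpha_ge0 (ltW htheta).
have v_ge0 r a : 0 <= vval c o d w alpha gamma theta r a by apply: vval_ge0.
pose x0 r := kth (tbar r).
pose G r := cut (x0 r) (s r) (vval c o d w alpha gamma theta r) (uval ybar zbar).
have G_max r (t : 'I_(size (s r))) : G r t <= G r (tbar r).
  have [_ _ sorted_sr] := hs r; have [crossing below] := htbar r.
  exact: cut_le_crossing.
have G_ge0 r : 0 <= G r (tbar r).
  by have [_ below] := htbar r; rewrite cut_ge0 ?prefix_sum_crossing_le1.
have feasG := feasible_eta (eta' := fun r => G r (tbar r)) feas G_ge0 G_max.
rewrite /FZS_objective (optimal_eta_sum hopt feasG); last first.
  by move=> r; apply: feasible_cut_le.
by congr (_ + _); apply: eq_bigr => r _; rewrite /G /x0 cutE -kth_nth.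
Qed.
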